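(* Let $G$ be a weakly-reversible chemical reaction network in $s$ species and $\mathbf{k}$ a field of characteristic zero. If $G$ is atomic, then the ideal $(\mathcal{E}_G)\subseteq\mathbf{k}[x_1,\dots,x_s]$ is prime.
   Context: A chemical reaction network (CRN) consists of positive integers $s,n$, a finite directed graph $G$ with vertex set $\{1,\dots,n\}$ and edge set $E(G)$, and an injective labeling of vertex $i$ by a monic monomial $\psi_i=\prod_{j=1}^s x_j^{y_{ij}}$. $G$ is weakly-reversible iff each connected component is strongly connected. The associated event-system $\mathcal{E}_G$ is the set of binomials $\psi_i-\psi_j$, one for each pair $\{i,j\}$ with $(i,j)\in E(G)$ or $(j,i)\in E(G)$, and $(\mathcal{E}_G)$ is the ideal it generates. The event-graph $\overline{G}$ has as vertices all monic monomials in $x_1,\dots,x_s$ (including $1$), with an edge $(N\psi_i,N\psi_j)$ for each $(i,j)\in E(G)$ and each monic monomial $N$. The atoms of $G$ are the variables $x_i$ that are isolated vertices of $\overline{G}$. An atomic monomial is a monic monomial all of whose variables are atoms. $G$ is atomic iff every connected component of $\overline{G}$ contains exactly one atomic monomial. *)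

From HB Require Import structures.
From mathcomp Require Import all_boot all_order all_algebra.
From mathcomp Require Import mpoly.
From Stdlib Require Import Relations.
Set Implicit Arguments. Unset Strict Implicit. Unset Printing Implicit Defensive.
Import GRing.Theory.
Local Open Scope ring_scope.

(** A chemical reaction network: vertices 'I_n, directed edges given by the
    relation E, vertex i labeled by the monic monomial with exponent vector y i
    in 'X_{1..s}; the labeling must be injective. *)

Definition sym_edge (n : nat) (E : rel 'I_n) : rel 'I_n :=
  fun i j => E i j || E j i.

Definition weakly_reversible (n : nat) (E : rel 'I_n) : Prop :=
  forall i j : 'I_n, connect (sym_edge E) i j -> connect E i j.

Definition event_edge (s n : nat) (E : rel 'I_n) (y : 'I_n -> 'X_{1..s})
  (m m' : 'X_{1..s}) : Prop :=
  exists (i j : 'I_n) (N : 'X_{1..s}),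
    E i j /\ m = mnm_add N (y i) /\ m' = mnm_add N (y j).

Definition event_connected (s n : nat) (E : rel 'I_n) (y : 'I_n -> 'X_{1..s}) :
  'X_{1..s} -> 'X_{1..s} -> Prop :=
  clos_refl_sym_trans _ (event_edge E y).

Definition is_atom (s n : nat) (E : rel 'I_n) (y : 'I_n -> 'X_{1..s})
  (k : 'I_s) : Prop :=
  forall m : 'X_{1..s},
    ~ event_edge E y (mnm1 k) m /\ ~ event_edge E y m (mnm1 k).

Definition atomic_monomial (s n : nat) (E : rel 'I_n) (y : 'I_n -> 'X_{1..s})
  (m : 'X_{1..s}) : Prop :=
  forall k : 'I_s, (0 < m k)%N -> is_atom E y k.

Definition atomic_crn (s n : nat) (E : rel 'I_n) (y : 'I_n -> 'X_{1..s}) : Prop :=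
  forall m : 'X_{1..s},
    exists! a : 'X_{1..s}, atomic_monomial E y a /\ event_connected E y m a.

Definition event_binomial (F : fieldType) (s n : nat) (y : 'I_n -> 'X_{1..s})
  (i j : 'I_n) : {mpoly F[s]} :=
  mpolyX F (y i) - mpolyX F (y j).

Definition in_event_ideal (F : fieldType) (s n : nat) (E : rel 'I_n)
  (y : 'I_n -> 'X_{1..s}) (p : {mpoly F[s]}) : Prop :=
  exists c : 'I_n -> 'I_n -> {mpoly F[s]},
    p = \sum_(i : 'I_n) \sum_(j : 'I_n | E i j) c i j * event_binomial F y i j.

Definition prime_ideal_pred (R : comNzRingType) (I : R -> Prop) : Prop :=
  ~ I 1 /\ forall a b : R, I (a * b) -> I a \/ I b.

From HB Require Import structures.
From mathcomp Require Import all_boot all_order all_algebra.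
From mathcomp Require Import mpoly.
From Stdlib Require Import Relations ClassicalEpsilon.
Set Implicit Arguments.
Unset Strict Implicit.
Unset Printing Implicit Defensive.
Import GRing.Theory.
Local Open Scope ring_scope.

(* Atomicity gives every monomial m a unique atomic monomial a(m) in its
   component of the event-graph.  Components are stable under translation, so
   a is additive, and substituting x_k := x^(a(x_k)) defines a ring
   endomorphism phi of k[x] with phi(x^m) = x^(a(m)).  Every generator
   psi_i - psi_j lies in the kernel, while p - phi p lies in (E_G) since each
   x^m - x^(a(m)) does; hence (E_G) = ker phi, a prime ideal because k[x] is a
   domain. *)

Lemma prime_ideal_pred_kernel (R : comNzRingType) (S : idomainType)
    (f : {rmorphism R -> S}) (I : R -> Prop) :
  (forall p, I p <-> f p = 0) -> prime_ideal_pred I.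
Proof.
move=> kerI; split; first by rewrite kerI rmorph1; apply/eqP; exact: oner_neq0.
move=> p q; rewrite !kerI rmorphM => /eqP; rewrite mulf_eq0.
by case/orP => /eqP; [left | right].
Qed.

Section EventIdeal.

Variables (F : fieldType) (s n : nat) (E : rel 'I_n) (y : 'I_n -> 'X_{1..s}).

Local Notation I := (@in_event_ideal F s n E y).

Lemma in_event_ideal0 : I 0.
Proof.
exists (fun _ _ => 0); rewrite big1 // => i _; rewrite big1 // => j _.
exact: mul0r.
Qed.

Lemma in_event_idealD p q : I p -> I q -> I (p + q).
Proof.
move=> [c ->] [d ->]; exists (fun i j => c i j + d i j).
rewrite -big_split; apply: eq_bigr => i _; rewrite -big_split.
by apply: eq_bigr => j _; rewrite mulrDl.
Qed.

Lemma in_event_idealMl r p : I p -> I (r * p).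
Proof.
move=> [c ->]; exists (fun i j => r * c i j).
rewrite mulr_sumr; apply: eq_bigr => i _; rewrite mulr_sumr.
by apply: eq_bigr => j _; rewrite mulrA.
Qed.

Lemma in_event_ideal_binomial i0 j0 : E i0 j0 -> I (event_binomial F y i0 j0).
Proof.
move=> Eij; exists (fun i j => if (i == i0) && (j == j0) then 1 else 0).
rewrite (bigD1 i0) //= (bigD1 j0) //= !eqxx /= mul1r big1 ?addr0.
  rewrite big1 ?addr0 // => i ni; rewrite big1 // => j _.
  by rewrite (negbTE ni) mul0r.
by move=> j /andP [_ nj]; rewrite (negbTE nj) mul0r.
Qed.

Lemma in_event_ideal_connected m m' :
  event_connected E y m m' -> I ('X_[m] - 'X_[m']).
Proof.
elim=> [u v [i [j [N [Eij [-> ->]]]]] | u | u v _ Iuv | u v w _ Iuv _ Ivw].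
- rewrite !mpolyXD -mulrBr; exact/in_event_idealMl/in_event_ideal_binomial.
- by rewrite subrr; exact: in_event_ideal0.
- by rewrite -opprB -mulN1r; exact: in_event_idealMl.
- by rewrite -(subrKA 'X_[v]); exact: in_event_idealD.
Qed.

Lemma event_connectedDr m m' N :
  event_connected E y m m' -> event_connected E y (m + N)%MM (m' + N)%MM.
Proof.
elim=> [u v [i [j [N0 [Eij [-> ->]]]]] | u | u v _ | u v w _ Huv _ Hvw].
- apply: rst_step; exists i, j, (N0 + N)%MM.
  by rewrite -!addmA [(y i + N)%MM]addmC [(y j + N)%MM]addmC.
- exact: rst_refl.
- exact: rst_sym.
- exact: rst_trans Hvw.
Qed.

Hypothesis atomic : atomic_crn E y.

Definition atomic_rep (m : 'X_{1..s}) : 'X_{1..s} :=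
  proj1_sig (constructive_indefinite_description _ (atomic m)).

Lemma atomic_repP m :
  (atomic_monomial E y (atomic_rep m) /\ event_connected E y m (atomic_rep m))
  /\ forall b, atomic_monomial E y b /\ event_connected E y m b -> atomic_rep m = b.
Proof. exact: proj2_sig (constructive_indefinite_description _ (atomic m)). Qed.

Lemma atomic_rep_atomic m : atomic_monomial E y (atomic_rep m).
Proof. by case: (atomic_repP m) => [[]]. Qed.

Lemma atomic_rep_connected m : event_connected E y m (atomic_rep m).
Proof. by case: (atomic_repP m) => [[]]. Qed.

Lemma atomic_rep_unique m b :
  atomic_monomial E y b -> event_connected E y m b -> atomic_rep m = b.
Proof. by case: (atomic_repP m) => _ uniq_rep Ab Cmb; apply: uniq_rep. Qed.

Lemma atomic_rep_eq m m' : event_connected E y m m' -> atomic_rep m = atomic_rep m'.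
Proof.
move=> Cmm'; apply: atomic_rep_unique; first exact: atomic_rep_atomic.
exact: rst_trans Cmm' (atomic_rep_connected m').
Qed.

Lemma atomic_rep0 : atomic_rep 0%MM = 0%MM.
Proof. by apply: atomic_rep_unique; [move=> k; rewrite mnm0E | apply: rst_refl]. Qed.

Lemma atomic_repD m1 m2 :
  atomic_rep (m1 + m2)%MM = (atomic_rep m1 + atomic_rep m2)%MM.
Proof.
apply: atomic_rep_unique.
  by move=> k; rewrite mnmDE addn_gt0 => /orP [] /atomic_rep_atomic.
apply: (rst_trans _ _ _ (atomic_rep m1 + m2)%MM).
  exact/event_connectedDr/atomic_rep_connected.
rewrite addmC [(atomic_rep m1 + _)%MM]addmC.
exact/event_connectedDr/atomic_rep_connected.
Qed.

Lemma atomic_repMn m k : atomic_rep (m *+ k)%MM = (atomic_rep m *+ k)%MM.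
Proof.
by elim: k => [|k IHk]; rewrite ?mulm0n ?atomic_rep0 // !mulmS atomic_repD IHk.
Qed.

Definition atomic_subst : {rmorphism {mpoly F[s]} -> {mpoly F[s]}} :=
  mmap (@mpolyC s F) (fun k => 'X_[atomic_rep U_(k)%MM]).

Lemma atomic_substX m : atomic_subst 'X_[m] = 'X_[atomic_rep m].
Proof.
rewrite /atomic_subst /= mmapX /mmap1 mprodXnE {2}[m]multinomUE_id.
rewrite (big_morph atomic_rep atomic_repD atomic_rep0).
by congr 'X_[_]; apply: eq_bigr => k _; rewrite atomic_repMn.
Qed.

Lemma atomic_subst_event_ideal p : I p -> atomic_subst p = 0.
Proof.
move=> [c ->]; rewrite rmorph_sum; apply: big1 => i _.
rewrite rmorph_sum; apply: big1 => j Eij.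
rewrite rmorphM /event_binomial rmorphB /= !atomic_substX.
rewrite (@atomic_rep_eq (y i) (y j)) ?subrr ?mulr0 //.
by apply: rst_step; exists i, j, 0%MM; rewrite !add0m.
Qed.

Lemma in_event_ideal_subst p : I (p - atomic_subst p).
Proof.
elim/mpolyind: p => [|c m p _ _ IHp].
  by rewrite rmorph0 subr0; exact: in_event_ideal0.
have -> : c *: 'X_[m] + p - atomic_subst (c *: 'X_[m] + p) =
          c%:MP * ('X_[m] - 'X_[atomic_rep m]) + (p - atomic_subst p).
  rewrite rmorphD /= [atomic_subst _]mmapZ atomic_substX /=.
  by rewrite !mul_mpolyC scalerBr opprD addrACA.
exact/in_event_idealD/IHp/in_event_idealMl/in_event_ideal_connected/atomic_rep_connected.
Qed.

Lemma in_event_idealE p : I p <-> atomic_subst p = 0.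
Proof.
split; first exact: atomic_subst_event_ideal.
by move=> subst0; move: (in_event_ideal_subst p); rewrite subst0 subr0.
Qed.

End EventIdeal.

Theorem lemma5p4 (F : fieldType) (s n : nat) (E : rel 'I_n)
  (y : 'I_n -> 'X_{1..s}) :
  (0 < s)%N -> (0 < n)%N -> injective y ->
  [pchar F] =i pred0 ->
  weakly_reversible E ->
  atomic_crn E y ->
  prime_ideal_pred (@in_event_ideal F s n E y).
Proof.
move=> _ _ _ _ _ atomic.
exact: (prime_ideal_pred_kernel (in_event_idealE atomic)).
Qed.
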